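(* Let $0<\gamma<1$ and let the coefficients $l_k^{2,\gamma}$ be defined by $\left((1-\zeta)+\tfrac12(1-\zeta)^2\right)^{\gamma}=\sum_{k=0}^\infty l_k^{2,\gamma}\zeta^k$ (equivalently $l_m^{2,\gamma}=(3/2)^{\gamma}\sum_{k=0}^{m}3^{-k}g_k^\gamma g_{m-k}^\gamma$ with $g_k^\gamma=(-1)^k\binom{\gamma}{k}$). Then $$g(\gamma,z)=\sum_{k=1}^\infty l_k^{2,\gamma}\left(\cos(kz)-1\right)\ge0\quad\text{for all } z\in[0,\pi].$$ *)

From Stdlib Require Import Reals.
From Coquelicot Require Import Coquelicot.
Open Scope R_scope.

Fixpoint gbinom (a : R) (k : nat) : R :=
  match k with
  | O => 1
  | S k' => gbinom a k' * (a - INR k') / INR (S k')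
  end.

Definition gcoef (gamma : R) (k : nat) : R := (-1) ^ k * gbinom gamma k.

(* l_m^{2,gamma} = (3/2)^gamma * sum_{k=0}^m 3^{-k} g_k^gamma g_{m-k}^gamma,
   the Taylor coefficients of ((1-z) + (1-z)^2/2)^gamma. *)
Definition l2coef (gamma : R) (m : nat) : R :=
  Rpower (3 / 2) gamma *
  sum_f_R0 (fun k => / 3 ^ k * gcoef gamma k * gcoef gamma (m - k)) m.

(* The k-th term (k >= 1) of g(gamma, z) = sum_{k>=1} l_k (cos(kz) - 1),
   reindexed from 0. *)
Definition gterm (gamma z : R) (n : nat) : R :=
  l2coef gamma (S n) * (cos (INR (S n) * z) - 1).

From Stdlib Require Import Reals Lra Lia.
From Coquelicot Require Import Coquelicot.
Open Scope R_scope.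

(* Since (1 - ζ) + (1 - ζ)^2 / 2 = (3/2) (1 - ζ) (1 - ζ/3), the l_k are (3/2)^γ times the
   Cauchy product of the binomial coefficients of (1 - ζ/3)^γ and (1 - ζ)^γ; as g_k < 0 for
   k >= 1 and the partial sums of g_k telescope, all these series converge absolutely on the
   closed unit disc. For r < 1, sum_k l_k r^k cos(kz) is therefore the real part of
   (3/2)^γ (1 - w/3)^γ (1 - w)^γ at w = r e^{iz}. Each factor (1 - α w)^γ has argument
   γ atan(Im/Re) in [-γπ/2, 0]; this closed form is obtained without complex powers, by showing
   that the power series and the closed form solve the same linear differential equation in r.
   The two arguments add up to at least -γπ/2 because Re[(1 - w)(1 - w/3)] >= 0, so the real
   part is nonnegative. At z = 0 it equals (3/2)^γ (1 - r/3)^γ (1 - r)^γ -> 0, and by Abel's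
   theorem for absolutely summable series g(γ, z) is the limit as r -> 1 of the difference of
   these real parts at z and at 0. *)

Lemma pow_unit_interval x n : 0 <= x <= 1 -> 0 <= x ^ n <= 1.
Proof.
  intros H. split; [apply pow_le; lra|].
  rewrite <- (pow1 n). apply pow_incr. exact H.
Qed.

Lemma one_sub_pow_le r k : 0 <= r <= 1 -> 1 - r ^ k <= INR k * (1 - r).
Proof.
  intros Hr. induction k as [|k IH]; [simpl; lra|].
  rewrite S_INR. simpl pow. pose proof (pow_unit_interval r k Hr). nra.
Qed.

Lemma Rpower_pos x y : 0 < Rpower x y.
Proof. apply exp_pos. Qed.

Lemma Rpower_pow_l x n y : 0 < x -> Rpower (x ^ n) y = Rpower x y ^ n.
Proof.
  intros Hx. rewrite <- (Rpower_pow n x Hx), <- (Rpower_pow n (Rpower x y)) by apply Rpower_pos.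
  rewrite !Rpower_mult, Rmult_comm. reflexivity.
Qed.

Lemma cos_S_mul k z : cos (INR (S k) * z) = cos z * cos (INR k * z) - sin z * sin (INR k * z).
Proof. rewrite S_INR, Rmult_plus_distr_r, Rmult_1_l, Rplus_comm. apply cos_plus. Qed.

Lemma sin_S_mul k z : sin (INR (S k) * z) = sin z * cos (INR k * z) + cos z * sin (INR k * z).
Proof. rewrite S_INR, Rmult_plus_distr_r, Rmult_1_l, Rplus_comm. apply sin_plus. Qed.

Lemma atan_le x y : x <= y -> atan x <= atan y.
Proof. intros [H | ->]; [left; apply atan_increasing, H | apply Rle_refl]. Qed.

Lemma atan_add_ge u v : u <= 0 -> v <= 0 -> u * v <= 1 -> - (PI / 2) <= atan u + atan v.
Proof.
  intros Hu Hv Huv. destruct Hv as [Hv | ->]; [|rewrite atan_0; pose proof (atan_bound u); lra].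
  assert (Ev : atan v = - (PI / 2) + atan (/ - v)) by (rewrite atan_inv, atan_opp by lra; ring).
  assert (/ v <= u).
  { apply (Rmult_le_reg_r (- v)); [lra|]. replace (/ v * - v) with (-1) by (field; lra). nra. }
  assert (atan (/ v) <= atan u) by (apply atan_le; assumption).
  rewrite Ev, Rinv_opp, atan_opp. lra.
Qed.

(* (p + i q) E e^{-i th} is constant when p + i q and E^{-1} e^{i th} have the same
   logarithmic derivative k1 + i k2. *)
Lemma is_derive_rotation (p q E th : R -> R) (x k1 k2 : R) :
  is_derive p x (k1 * p x - k2 * q x) -> is_derive q x (k1 * q x + k2 * p x) ->
  is_derive E x (- k1 * E x) -> is_derive th x k2 ->
  is_derive (fun r => E r * (cos (th r) * p r + sin (th r) * q r)) x 0 /\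
  is_derive (fun r => E r * (cos (th r) * q r - sin (th r) * p r)) x 0.
Proof.
  intros Hp Hq HE Hth.
  pose proof (is_derive_unique (fun t : R => p t) x _ Hp) as Dp.
  pose proof (is_derive_unique (fun t : R => q t) x _ Hq) as Dq.
  pose proof (is_derive_unique (fun t : R => E t) x _ HE) as DE.
  pose proof (is_derive_unique (fun t : R => th t) x _ Hth) as Dth.
  split; auto_derive;
    solve [repeat split; eexists; eassumption | rewrite Dp, Dq, DE, Dth; ring].
Qed.

(** * Series and power series *)

Lemma ex_series_nonneg_bounded (a : nat -> R) M :
  (forall n, 0 <= a n) -> (forall n, sum_f_R0 a n <= M) -> ex_series a.
Proof.
  intros Ha HM.
  destruct (growing_cv (sum_f_R0 a)) as [l Hl].
  - intro n. simpl. specialize (Ha (S n)). lra.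
  - exists M. intros x [n ->]. apply HM.
  - exists l. apply is_series_Reals. exact Hl.
Qed.

Lemma ex_series_abs_le (a b : nat -> R) :
  (forall k, Rabs (a k) <= b k) -> ex_series b -> ex_series (fun k => Rabs (a k)).
Proof.
  intros Hab. apply (@ex_series_le R_AbsRing R_CompleteNormedModule).
  intros n. change (norm (Rabs (a n))) with (Rabs (Rabs (a n))).
  rewrite Rabs_Rabsolu. apply Hab.
Qed.

Lemma Series_nonneg (a : nat -> R) : (forall n, 0 <= a n) -> ex_series a -> 0 <= Series a.
Proof.
  intros Ha Hex. pose proof (Series_Rabs a) as H.
  rewrite (Series_ext (fun n => Rabs (a n)) a) in H by (intros; apply Rabs_pos_eq, Ha).
  pose proof (Rabs_pos (Series a)). apply Rle_trans with (Rabs (Series a)); [lra|].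
  apply H. apply ex_series_ext with a; [intros; symmetry; apply Rabs_pos_eq, Ha | exact Hex].
Qed.

Lemma is_series_unique_ext (u v : nat -> R) lu lv :
  (forall n, u n = v n) -> is_series u lu -> is_series v lv -> lu = lv.
Proof.
  intros Huv Hu Hv. apply (is_series_ext _ _ _ Huv) in Hu.
  rewrite <- (is_series_unique _ _ Hu). exact (is_series_unique _ _ Hv).
Qed.

Lemma abs_lt_CV_radius (a : nat -> R) r :
  ex_series (fun k => Rabs (a k)) -> Rabs r < 1 -> Rbar_lt (Rabs r) (CV_radius a).
Proof.
  intros Ha Hr. apply Rbar_lt_le_trans with 1; [exact Hr|].
  apply (proj1 (Lub_Rbar_correct (CV_disk a))).
  eapply ex_series_ext; [|exact Ha]. intros n. simpl. rewrite pow1, Rmult_1_r. reflexivity.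
Qed.

Lemma is_series_PSeries_terms (a : nat -> R) r : Rbar_lt (Rabs r) (CV_radius a) ->
  is_series (fun n => a n * r ^ n) (PSeries a r) /\
  is_series (fun n => PS_derive a n * r ^ n) (PSeries (PS_derive a) r) /\
  is_series (fun n => INR n * a n * r ^ n) (r * PSeries (PS_derive a) r).
Proof.
  intros Hr.
  pose proof (PSeries_correct _ _ (CV_radius_inside _ _ Hr)) as Ha.
  pose proof (PSeries_correct _ _ (ex_pseries_derive _ _ Hr)) as Hd.
  pose proof (is_pseries_incr_1 _ _ _ Hd) as Hi.
  apply is_pseries_R in Ha, Hd, Hi.
  split; [exact Ha | split; [exact Hd|]].
  eapply is_series_ext; [|exact Hi]. intros [|n]; cbn [PS_incr_1].
  - rewrite !Rmult_0_l. reflexivity.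
  - reflexivity.
Qed.

Section Abel_absolute.

Variable c : nat -> R.
Hypothesis Hc : ex_series (fun k => Rabs (c k)).

Lemma ex_series_abs_mul_pow r : 0 <= r <= 1 -> ex_series (fun k => Rabs (c k * r ^ k)).
Proof.
  intros Hr. apply ex_series_abs_le with (fun k => Rabs (c k)); [|exact Hc].
  intros k. rewrite Rabs_mult. pose proof (pow_unit_interval r k Hr).
  pose proof (Rabs_pos (c k)). rewrite (Rabs_pos_eq (r ^ k)) by lra. nra.
Qed.

Lemma Series_sub_pow_abs_le r K : 0 <= r <= 1 ->
  Rabs (Series c - Series (fun k => c k * r ^ k)) <=
  Series (fun k => Rabs (c k)) * INR (S K) * (1 - r)
  + (Series (fun k => Rabs (c k)) - sum_f_R0 (fun k => Rabs (c k)) K).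
Proof.
  intros Hr.
  pose (d k := Rabs (c k) * (1 - r ^ k)).
  assert (Hd : forall k, Rabs (c k - c k * r ^ k) = d k /\ 0 <= d k <= Rabs (c k)).
  { intros k. unfold d. pose proof (pow_unit_interval r k Hr). pose proof (Rabs_pos (c k)).
    replace (c k - c k * r ^ k) with (c k * (1 - r ^ k)) by ring.
    rewrite Rabs_mult, (Rabs_pos_eq (1 - r ^ k)) by lra. split; [reflexivity | nra]. }
  assert (Ed : ex_series d).
  { apply ex_series_ext with (fun k => Rabs (c k - c k * r ^ k)); [intros; apply Hd|].
    apply ex_series_abs_le with (fun k => Rabs (c k)); [|exact Hc].
    intros k. destruct (Hd k) as [-> Hdk]. apply Hdk. }
  rewrite <- Series_minus
    by (apply ex_series_Rabs; first [exact Hc | apply ex_series_abs_mul_pow, Hr]).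
  eapply Rle_trans.
  { apply Series_Rabs. eapply ex_series_ext; [|exact Ed]. intros; symmetry; apply Hd. }
  rewrite (Series_ext _ d) by apply Hd.
  rewrite (Series_incr_n d (S K)), (Series_incr_n (fun k => Rabs (c k)) (S K))
    by (lia || assumption).
  simpl Init.Nat.pred.
  assert (Htail : Series (fun k => d (S K + k)%nat) <= Series (fun k => Rabs (c (S K + k)%nat))).
  { apply Series_le; [intros; apply Hd | apply (ex_series_incr_n (fun k => Rabs (c k))), Hc]. }
  assert (Hhead : sum_f_R0 d K <= sum_f_R0 (fun k => Rabs (c k)) K * (INR (S K) * (1 - r))).
  { rewrite Rmult_comm, scal_sum. apply sum_Rle. intros k Hk. unfold d.
    pose proof (Rabs_pos (c k)). apply Rmult_le_compat_l; [assumption|].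
    eapply Rle_trans; [apply one_sub_pow_le, Hr|].
    apply Rmult_le_compat_r; [lra | apply le_INR; lia]. }
  assert (0 <= Series (fun k => Rabs (c (S K + k)%nat))).
  { apply Series_nonneg; [intros; apply Rabs_pos|].
    apply (ex_series_incr_n (fun k => Rabs (c k))), Hc. }
  assert (0 <= INR (S K) * (1 - r)) by (pose proof (pos_INR (S K)); nra).
  nra.
Qed.

Lemma is_lim_seq_Series_pow (rn : nat -> R) : (forall n, 0 <= rn n <= 1) -> is_lim_seq rn 1 ->
  is_lim_seq (fun n => Series (fun k => c k * rn n ^ k)) (Series c).
Proof.
  intros Hrn Hl. apply is_lim_seq_spec. intros eps.
  set (M := Series (fun k => Rabs (c k))).
  assert (HM : 0 <= M) by (apply Series_nonneg; [intros; apply Rabs_pos | exact Hc]).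
  assert (Hs : infinite_sum (fun k => Rabs (c k)) M) by (apply is_series_Reals, Series_correct, Hc).
  destruct (Hs (eps / 2)) as [K HK]; [destruct eps; simpl; lra|].
  specialize (HK K (le_n _)). unfold Rdist in HK. apply Rabs_def2 in HK.
  set (N := INR (S K)).
  assert (HN : 0 < N) by (apply lt_0_INR; lia).
  assert (Hd : 0 < eps / (2 * (M * N + 1))).
  { destruct eps as [e He]; simpl. apply Rdiv_lt_0_compat; [lra | nra]. }
  apply is_lim_seq_spec in Hl. destruct (Hl (mkposreal _ Hd)) as [n0 Hn0].
  exists n0. intros n Hn. specialize (Hn0 n Hn). simpl in Hn0. apply Rabs_def2 in Hn0.
  rewrite Rabs_minus_sym. eapply Rle_lt_trans; [apply (Series_sub_pow_abs_le (rn n) K), Hrn|].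
  fold M N.
  assert (M * N * (1 - rn n) <= M * N * (eps / (2 * (M * N + 1)))).
  { apply Rmult_le_compat_l; [nra | lra]. }
  assert (M * N * (eps / (2 * (M * N + 1))) < eps / 2).
  { destruct eps as [e He]; simpl in *. apply (Rmult_lt_reg_r (2 * (M * N + 1))); [nra|].
    field_simplify; [nra | nra]. }
  lra.
Qed.

End Abel_absolute.

Lemma gcoef_0 g : gcoef g 0 = 1.
Proof. unfold gcoef; simpl; ring. Qed.

Lemma gcoef_S g k : gcoef g (S k) = gcoef g k * (INR k - g) / INR (S k).
Proof.
  unfold gcoef. change (gbinom g (S k)) with (gbinom g k * (g - INR k) / INR (S k)).
  change ((-1) ^ S k) with (-1 * (-1) ^ k). unfold Rdiv. ring.
Qed.

Lemma gcoef_lt_0 g k : 0 < g < 1 -> (0 < k)%nat -> gcoef g k < 0.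
Proof.
  intros Hg Hk. induction k as [|k IH]; [lia|].
  rewrite gcoef_S. destruct k as [|k].
  - rewrite gcoef_0. simpl. lra.
  - assert (gcoef g (S k) < 0) by (apply IH; lia).
    assert (1 <= INR (S k)) by (apply (le_INR 1); lia).
    assert (0 < INR (S (S k))) by (apply lt_0_INR; lia).
    apply Rdiv_neg_pos; [apply Rmult_neg_pos|]; lra.
Qed.

Lemma sum_gcoef g n : g <> 0 ->
  sum_f_R0 (gcoef g) n = - INR (S n) * gcoef g (S n) / g.
Proof.
  intros Hg. induction n as [|n IH]; simpl sum_f_R0.
  - rewrite gcoef_S, gcoef_0. simpl. field. exact Hg.
  - rewrite IH, (gcoef_S g (S n)), !S_INR. field.
    split; [|exact Hg]. pose proof (pos_INR n). lra.
Qed.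

Lemma sum_abs_gcoef_le g n : 0 < g < 1 ->
  sum_f_R0 (fun k => Rabs (gcoef g k)) n <= 2.
Proof.
  intros Hg.
  assert (E : sum_f_R0 (fun k => Rabs (gcoef g k)) n = 2 - sum_f_R0 (gcoef g) n).
  { induction n as [|n IH]; simpl sum_f_R0.
    - rewrite gcoef_0, Rabs_R1. ring.
    - rewrite IH, Rabs_left by (apply gcoef_lt_0; [exact Hg | lia]). ring. }
  rewrite E, sum_gcoef by lra.
  assert (gcoef g (S n) < 0) by (apply gcoef_lt_0; [exact Hg | lia]).
  pose proof (pos_INR (S n)).
  assert (0 <= - INR (S n) * gcoef g (S n) / g) by (apply Rdiv_le_0_compat; nra).
  lra.
Qed.

Lemma ex_series_abs_gcoef g : 0 < g < 1 -> ex_series (fun k => Rabs (gcoef g k)).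
Proof.
  intros Hg. apply ex_series_nonneg_bounded with 2.
  - intros; apply Rabs_pos.
  - intros; apply sum_abs_gcoef_le; exact Hg.
Qed.

(** * The binomial series of (1 - α e^{iz} ζ)^γ *)

(* [pow_coef g al k] are the Taylor coefficients of (1 - al ζ)^g, and [re_coef], [im_coef]
   the real and imaginary parts of those of (1 - al e^{iz} ζ)^g. *)
Definition pow_coef (g al : R) (k : nat) : R := al ^ k * gcoef g k.
Definition re_coef (g al z : R) (k : nat) : R := pow_coef g al k * cos (INR k * z).
Definition im_coef (g al z : R) (k : nat) : R := pow_coef g al k * sin (INR k * z).

Lemma pow_coef_0 g al : pow_coef g al 0 = 1.
Proof. unfold pow_coef. rewrite gcoef_0. simpl. ring. Qed.

Lemma pow_coef_S g al k :
  pow_coef g al (S k) = al * (INR k - g) / INR (S k) * pow_coef g al k.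
Proof. unfold pow_coef. rewrite gcoef_S. simpl pow. unfold Rdiv. ring. Qed.

Lemma abs_pow_coef_le g al k : 0 <= al <= 1 -> Rabs (pow_coef g al k) <= Rabs (gcoef g k).
Proof.
  intros Hal. unfold pow_coef. rewrite Rabs_mult.
  pose proof (pow_unit_interval al k Hal). pose proof (Rabs_pos (gcoef g k)).
  rewrite Rabs_pos_eq by lra. nra.
Qed.

Lemma ex_series_abs_pow_coef g al : 0 < g < 1 -> 0 <= al <= 1 ->
  ex_series (fun k => Rabs (pow_coef g al k)).
Proof.
  intros Hg Hal. apply ex_series_abs_le with (fun k => Rabs (gcoef g k)).
  - intros k. apply abs_pow_coef_le, Hal.
  - apply ex_series_abs_gcoef, Hg.
Qed.

Lemma ex_series_abs_re_coef g al z : 0 < g < 1 -> 0 <= al <= 1 ->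
  ex_series (fun k => Rabs (re_coef g al z k)).
Proof.
  intros Hg Hal. apply ex_series_abs_le with (fun k => Rabs (pow_coef g al k)).
  - intros k. unfold re_coef. rewrite Rabs_mult.
    pose proof (Rabs_pos (pow_coef g al k)).
    assert (Rabs (cos (INR k * z)) <= 1) by apply Rabs_le, COS_bound. nra.
  - apply ex_series_abs_pow_coef; assumption.
Qed.

Lemma ex_series_abs_im_coef g al z : 0 < g < 1 -> 0 <= al <= 1 ->
  ex_series (fun k => Rabs (im_coef g al z k)).
Proof.
  intros Hg Hal. apply ex_series_abs_le with (fun k => Rabs (pow_coef g al k)).
  - intros k. unfold im_coef. rewrite Rabs_mult.
    pose proof (Rabs_pos (pow_coef g al k)).
    assert (Rabs (sin (INR k * z)) <= 1) by apply Rabs_le, SIN_bound. nra.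
  - apply ex_series_abs_pow_coef; assumption.
Qed.

(* 1 - al e^{iz} r = base_re al z r + i base_im al z r *)
Definition base_re (al z r : R) : R := 1 - al * r * cos z.
Definition base_im (al z r : R) : R := - (al * r * sin z).
Definition base_sqnorm (al z r : R) : R := base_re al z r ^ 2 + base_im al z r ^ 2.

(* Real and imaginary parts of -g w / (1 - w r), w = al e^{iz}, the logarithmic derivative
   of (1 - w r)^g. *)
Definition logder_re (g al z r : R) : R :=
  - g * al * (cos z * base_re al z r + sin z * base_im al z r) / base_sqnorm al z r.
Definition logder_im (g al z r : R) : R :=
  - g * al * (sin z * base_re al z r - cos z * base_im al z r) / base_sqnorm al z r.

Lemma base_re_pos al z r : 0 <= al <= 1 -> Rabs r < 1 -> 0 < base_re al z r.
Proof.
  intros Hal Hr. unfold base_re.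
  assert (Rabs (al * r * cos z) < 1).
  { rewrite !Rabs_mult, (Rabs_pos_eq al) by lra.
    assert (Rabs (cos z) <= 1) by apply Rabs_le, COS_bound.
    pose proof (Rabs_pos r). pose proof (Rabs_pos (cos z)).
    assert (al * Rabs r <= Rabs r) by nra.
    apply Rle_lt_trans with (Rabs r); [nra | exact Hr]. }
  apply Rabs_def2 in H. lra.
Qed.

Lemma base_sqnorm_pos al z r : 0 <= al <= 1 -> Rabs r < 1 -> 0 < base_sqnorm al z r.
Proof.
  intros Hal Hr. pose proof (base_re_pos al z r Hal Hr).
  unfold base_sqnorm. pose proof (pow2_ge_0 (base_im al z r)). nra.
Qed.

(* Modulus and argument of (1 - al e^{iz} r)^g; atan gives the argument because base_re > 0. *)
Definition pow_abs (g al z r : R) : R := Rpower (base_sqnorm al z r) (g / 2).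
Definition pow_arg (g al z r : R) : R := g * atan (base_im al z r / base_re al z r).

Section Binomial_pseries.

Variables g al z : R.
Hypothesis Hg : 0 < g < 1.
Hypothesis Hal : 0 <= al <= 1.

Lemma PS_derive_pow_coef n :
  PS_derive (pow_coef g al) n = al * (INR n - g) * pow_coef g al n.
Proof.
  unfold PS_derive. rewrite pow_coef_S. field.
  apply not_0_INR. lia.
Qed.

Lemma re_coef_ode n :
  PS_derive (re_coef g al z) n - al * cos z * (INR n * re_coef g al z n)
  + al * sin z * (INR n * im_coef g al z n)
  = - g * al * (cos z * re_coef g al z n - sin z * im_coef g al z n).
Proof.
  unfold PS_derive, re_coef, im_coef. rewrite cos_S_mul.
  replace (INR (S n) * (pow_coef g al (S n) * _)) with
    (PS_derive (pow_coef g al) n * (cos z * cos (INR n * z) - sin z * sin (INR n * z))) by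
    (unfold PS_derive; ring).
  rewrite PS_derive_pow_coef. ring.
Qed.

Lemma im_coef_ode n :
  PS_derive (im_coef g al z) n - al * cos z * (INR n * im_coef g al z n)
  - al * sin z * (INR n * re_coef g al z n)
  = - g * al * (cos z * im_coef g al z n + sin z * re_coef g al z n).
Proof.
  unfold PS_derive, re_coef, im_coef. rewrite sin_S_mul.
  replace (INR (S n) * (pow_coef g al (S n) * _)) with
    (PS_derive (pow_coef g al) n * (sin z * cos (INR n * z) + cos z * sin (INR n * z))) by
    (unfold PS_derive; ring).
  rewrite PS_derive_pow_coef. ring.
Qed.

Lemma re_pseries_ode r : Rabs r < 1 ->
  base_re al z r * PSeries (PS_derive (re_coef g al z)) r
  - base_im al z r * PSeries (PS_derive (im_coef g al z)) r
  = - g * al * (cos z * PSeries (re_coef g al z) r - sin z * PSeries (im_coef g al z) r).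
Proof.
  intros Hr.
  destruct (is_series_PSeries_terms (re_coef g al z) r) as [Ha [Hda Hia]].
  { apply abs_lt_CV_radius; [apply ex_series_abs_re_coef; assumption | exact Hr]. }
  destruct (is_series_PSeries_terms (im_coef g al z) r) as [Hb [_ Hib]].
  { apply abs_lt_CV_radius; [apply ex_series_abs_im_coef; assumption | exact Hr]. }
  pose proof (is_series_plus _ _ _ _ (is_series_minus _ _ _ _ Hda
    (is_series_scal (al * cos z) _ _ Hia)) (is_series_scal (al * sin z) _ _ Hib)) as HL.
  pose proof (is_series_scal (- g * al) _ _ (is_series_minus _ _ _ _
    (is_series_scal (cos z) _ _ Ha) (is_series_scal (sin z) _ _ Hb))) as HR.
  unfold plus, minus, opp, scal in HL, HR; simpl in HL, HR; unfold mult in HL, HR; simpl in HL, HR.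
  unshelve epose proof (is_series_unique_ext _ _ _ _ _ HL HR) as E.
  { intros n. pose proof (f_equal (fun t => t * r ^ n) (re_coef_ode n)). cbv beta in *. lra. }
  unfold base_re, base_im. lra.
Qed.

Lemma im_pseries_ode r : Rabs r < 1 ->
  base_re al z r * PSeries (PS_derive (im_coef g al z)) r
  + base_im al z r * PSeries (PS_derive (re_coef g al z)) r
  = - g * al * (cos z * PSeries (im_coef g al z) r + sin z * PSeries (re_coef g al z) r).
Proof.
  intros Hr.
  destruct (is_series_PSeries_terms (im_coef g al z) r) as [Hb [Hdb Hib]].
  { apply abs_lt_CV_radius; [apply ex_series_abs_im_coef; assumption | exact Hr]. }
  destruct (is_series_PSeries_terms (re_coef g al z) r) as [Ha [_ Hia]].
  { apply abs_lt_CV_radius; [apply ex_series_abs_re_coef; assumption | exact Hr]. }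
  pose proof (is_series_minus _ _ _ _ (is_series_minus _ _ _ _ Hdb
    (is_series_scal (al * cos z) _ _ Hib)) (is_series_scal (al * sin z) _ _ Hia)) as HL.
  pose proof (is_series_scal (- g * al) _ _ (is_series_plus _ _ _ _
    (is_series_scal (cos z) _ _ Hb) (is_series_scal (sin z) _ _ Ha))) as HR.
  unfold plus, minus, opp, scal in HL, HR; simpl in HL, HR; unfold mult in HL, HR; simpl in HL, HR.
  unshelve epose proof (is_series_unique_ext _ _ _ _ _ HL HR) as E.
  { intros n. pose proof (f_equal (fun t => t * r ^ n) (im_coef_ode n)). cbv beta in *. lra. }
  unfold base_re, base_im. lra.
Qed.

Lemma is_derive_re_pseries r : Rabs r < 1 ->
  is_derive (PSeries (re_coef g al z)) r
    (logder_re g al z r * PSeries (re_coef g al z) r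
     - logder_im g al z r * PSeries (im_coef g al z) r).
Proof.
  intros Hr.
  pose proof (re_pseries_ode r Hr) as Ere. pose proof (im_pseries_ode r Hr) as Eim.
  pose proof (base_sqnorm_pos al z r Hal Hr) as HQ.
  replace (logder_re g al z r * _ - _) with (PSeries (PS_derive (re_coef g al z)) r).
  - apply is_derive_PSeries, abs_lt_CV_radius; [apply ex_series_abs_re_coef; assumption | exact Hr].
  - unfold logder_re, logder_im. unfold base_sqnorm in *.
    set (X := base_re al z r) in *. set (Y := base_im al z r) in *.
    set (A' := PSeries (PS_derive (re_coef g al z)) r) in *.
    set (B' := PSeries (PS_derive (im_coef g al z)) r) in *.
    transitivity ((X * (X * A' - Y * B') + Y * (X * B' + Y * A')) / (X ^ 2 + Y ^ 2)).
    + field. lra.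
    + rewrite Ere, Eim. field. lra.
Qed.

Lemma is_derive_im_pseries r : Rabs r < 1 ->
  is_derive (PSeries (im_coef g al z)) r
    (logder_re g al z r * PSeries (im_coef g al z) r
     + logder_im g al z r * PSeries (re_coef g al z) r).
Proof.
  intros Hr.
  pose proof (re_pseries_ode r Hr) as Ere. pose proof (im_pseries_ode r Hr) as Eim.
  pose proof (base_sqnorm_pos al z r Hal Hr) as HQ.
  replace (logder_re g al z r * _ + _) with (PSeries (PS_derive (im_coef g al z)) r).
  - apply is_derive_PSeries, abs_lt_CV_radius; [apply ex_series_abs_im_coef; assumption | exact Hr].
  - unfold logder_re, logder_im. unfold base_sqnorm in *.
    set (X := base_re al z r) in *. set (Y := base_im al z r) in *.
    set (A' := PSeries (PS_derive (re_coef g al z)) r) in *.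
    set (B' := PSeries (PS_derive (im_coef g al z)) r) in *.
    transitivity ((X * (X * B' + Y * A') - Y * (X * A' - Y * B')) / (X ^ 2 + Y ^ 2)).
    + field. lra.
    + rewrite Ere, Eim. field. lra.
Qed.

Lemma is_derive_base_sqnorm r :
  is_derive (base_sqnorm al z) r
    (- 2 * al * (cos z * base_re al z r + sin z * base_im al z r)).
Proof. unfold base_sqnorm, base_re, base_im. auto_derive; [exact I | ring]. Qed.

Lemma is_derive_pow_abs_inv r : Rabs r < 1 ->
  is_derive (fun t => Rpower (base_sqnorm al z t) (- g / 2)) r
    (- logder_re g al z r * Rpower (base_sqnorm al z r) (- g / 2)).
Proof.
  intros Hr. pose proof (base_sqnorm_pos al z r Hal Hr) as HQ.
  pose proof (is_derive_unique (fun t : R => base_sqnorm al z t) r _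
    (is_derive_base_sqnorm r)) as DQ.
  unfold logder_re, Rpower. auto_derive.
  - split; [eexists; apply is_derive_base_sqnorm | split; [exact HQ | exact I]].
  - rewrite DQ. field. lra.
Qed.

Lemma is_derive_pow_arg r : Rabs r < 1 -> is_derive (pow_arg g al z) r (logder_im g al z r).
Proof.
  intros Hr. pose proof (base_re_pos al z r Hal Hr) as HX.
  pose proof (base_sqnorm_pos al z r Hal Hr) as HQ.
  unfold pow_arg, logder_im. unfold base_sqnorm in *. unfold base_re, base_im in *.
  auto_derive.
  - lra.
  - unfold Rsqr. field. lra.
Qed.

Lemma rotated_pseries_const r : 0 <= r < 1 ->
  Rpower (base_sqnorm al z r) (- g / 2) * (cos (pow_arg g al z r) * PSeries (re_coef g al z) r
    + sin (pow_arg g al z r) * PSeries (im_coef g al z) r) = 1 /\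
  Rpower (base_sqnorm al z r) (- g / 2) * (cos (pow_arg g al z r) * PSeries (im_coef g al z) r
    - sin (pow_arg g al z r) * PSeries (re_coef g al z) r) = 0.
Proof.
  intros Hr.
  pose (E u := Rpower (base_sqnorm al z u) (- g / 2)).
  pose (A u := PSeries (re_coef g al z) u). pose (B u := PSeries (im_coef g al z) u).
  pose (th := pow_arg g al z).
  pose (U u := E u * (cos (th u) * A u + sin (th u) * B u)).
  pose (V u := E u * (cos (th u) * B u - sin (th u) * A u)).
  assert (Hder : forall t, 0 <= t <= r -> is_derive U t 0 /\ is_derive V t 0).
  { intros t Ht. assert (Rabs t < 1) by (apply Rabs_def1; lra).
    apply is_derive_rotation with (logder_re g al z t) (logder_im g al z t).
    - apply is_derive_re_pseries; assumption.
    - apply is_derive_im_pseries; assumption.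
    - apply is_derive_pow_abs_inv; assumption.
    - apply is_derive_pow_arg; assumption. }
  assert (E0 : E 0 = 1).
  { unfold E, base_sqnorm, base_re, base_im, Rpower.
    rewrite !Rmult_0_r, !Rmult_0_l, Ropp_0, Rminus_0_r.
    replace (1 ^ 2 + 0 ^ 2) with 1 by ring. rewrite ln_1, Rmult_0_r. apply exp_0. }
  assert (th0 : th 0 = 0).
  { unfold th, pow_arg, base_re, base_im.
    rewrite !Rmult_0_r, !Rmult_0_l, Ropp_0, Rdiv_0_l, atan_0. ring. }
  assert (A0 : A 0 = 1) by (unfold A; rewrite PSeries_0; unfold re_coef;
    rewrite pow_coef_0, Rmult_0_l, cos_0; ring).
  assert (B0 : B 0 = 0) by (unfold B; rewrite PSeries_0; unfold im_coef;
    rewrite pow_coef_0, Rmult_0_l, sin_0; ring).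
  assert (U0 : U 0 = 1) by (unfold U; rewrite E0, th0, A0, B0, cos_0, sin_0; ring).
  assert (V0 : V 0 = 0) by (unfold V; rewrite E0, th0, A0, B0, cos_0, sin_0; ring).
  destruct (Req_dec r 0) as [-> | Hr0]; [exact (conj U0 V0)|].
  change (U r = 1 /\ V r = 0). split.
  - rewrite <- U0. symmetry. apply eq_is_derive; [intros; apply Hder; assumption | lra].
  - rewrite <- V0. symmetry. apply eq_is_derive; [intros; apply Hder; assumption | lra].
Qed.

Lemma PSeries_pow_closed_form r : 0 <= r < 1 ->
  PSeries (re_coef g al z) r = pow_abs g al z r * cos (pow_arg g al z r) /\
  PSeries (im_coef g al z) r = pow_abs g al z r * sin (pow_arg g al z r).
Proof.
  intros Hr. destruct (rotated_pseries_const r Hr) as [HU HV].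
  assert (HE : pow_abs g al z r * Rpower (base_sqnorm al z r) (- g / 2) = 1).
  { unfold pow_abs. rewrite <- Rpower_plus. replace (g / 2 + - g / 2) with 0 by field.
    unfold Rpower. rewrite Rmult_0_l. apply exp_0. }
  pose proof (sin2_cos2 (pow_arg g al z r)) as Hsc. unfold Rsqr in Hsc.
  set (E := Rpower _ _) in *. set (c := cos _) in *. set (s := sin _) in *.
  set (A := PSeries (re_coef g al z) r) in *. set (B := PSeries (im_coef g al z) r) in *.
  split.
  - transitivity (pow_abs g al z r * (c * (E * (c * A + s * B)) - s * (E * (c * B - s * A)))).
    + transitivity (pow_abs g al z r * E * (s * s + c * c) * A); [rewrite HE, Hsc; ring | ring].
    + rewrite HU, HV. ring.
  - transitivity (pow_abs g al z r * (s * (E * (c * A + s * B)) + c * (E * (c * B - s * A)))).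
    + transitivity (pow_abs g al z r * E * (s * s + c * c) * B); [rewrite HE, Hsc; ring | ring].
    + rewrite HU, HV. ring.
Qed.

End Binomial_pseries.

(** * The generating function of the l_k *)

(* Real part of sum_k l_k (r e^{iz})^k = (3/2)^g (1 - r e^{iz} / 3)^g (1 - r e^{iz})^g. *)
Definition l2gen_re (g z r : R) : R :=
  Rpower (3 / 2) g * (PSeries (re_coef g (/ 3) z) r * PSeries (re_coef g 1 z) r
                      - PSeries (im_coef g (/ 3) z) r * PSeries (im_coef g 1 z) r).

Lemma ex_series_abs_l2coef g : 0 < g < 1 -> ex_series (fun n => Rabs (l2coef g n)).
Proof.
  intros Hg.
  pose (a k := Rabs (pow_coef g (/ 3) k)). pose (b k := Rabs (gcoef g k)).
  assert (Ha : ex_series (fun k => Rabs (a k))).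
  { apply ex_series_ext with a; [intros k; symmetry; apply Rabs_Rabsolu|].
    apply ex_series_abs_pow_coef; [exact Hg | lra]. }
  assert (Hb : ex_series (fun k => Rabs (b k))).
  { apply ex_series_ext with b; [intros k; symmetry; apply Rabs_Rabsolu|].
    apply ex_series_abs_gcoef, Hg. }
  pose proof (is_series_mult _ _ _ _ (Series_correct _ (ex_series_Rabs _ Ha))
    (Series_correct _ (ex_series_Rabs _ Hb)) Ha Hb) as Hab.
  apply ex_series_abs_le with
    (fun n => Rpower (3 / 2) g * sum_f_R0 (fun k => a k * b (n - k)%nat) n).
  - intros n. unfold l2coef.
    rewrite Rabs_mult, (Rabs_pos_eq (Rpower _ _)) by (left; apply Rpower_pos).
    apply Rmult_le_compat_l; [left; apply Rpower_pos|].
    eapply Rle_trans; [apply sum_f_R0_triangle|]. right. apply sum_eq. intros k _.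
    unfold a, b, pow_coef. rewrite <- Rabs_mult, pow_inv. reflexivity.
  - eexists. apply (is_series_scal (Rpower (3 / 2) g) _ _ Hab).
Qed.

Lemma is_series_l2coef_cos g z r : 0 < g < 1 -> Rabs r < 1 ->
  is_series (fun n => l2coef g n * r ^ n * cos (INR n * z)) (l2gen_re g z r).
Proof.
  intros Hg Hr.
  assert (H3 : 0 <= / 3 <= 1) by lra. assert (H1 : 0 <= 1 <= 1) by lra.
  assert (Hterms : forall a, ex_series (fun k => Rabs (a k)) ->
    is_series (fun n => a n * r ^ n) (PSeries a r) /\ ex_series (fun n => Rabs (a n * r ^ n))).
  { intros a Ha. pose proof (abs_lt_CV_radius a r Ha Hr) as Hin. split.
    - apply (is_series_PSeries_terms a r Hin).
    - apply CV_disk_inside, Hin. }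
  destruct (Hterms _ (ex_series_abs_re_coef g (/ 3) z Hg H3)) as [Sa3 Aa3].
  destruct (Hterms _ (ex_series_abs_re_coef g 1 z Hg H1)) as [Sa1 Aa1].
  destruct (Hterms _ (ex_series_abs_im_coef g (/ 3) z Hg H3)) as [Sb3 Ab3].
  destruct (Hterms _ (ex_series_abs_im_coef g 1 z Hg H1)) as [Sb1 Ab1].
  pose proof (is_series_scal (Rpower (3 / 2) g) _ _ (is_series_minus _ _ _ _
    (is_series_mult _ _ _ _ Sa3 Sa1 Aa3 Aa1) (is_series_mult _ _ _ _ Sb3 Sb1 Ab3 Ab1))) as M.
  eapply is_series_ext; [|exact M].
  intros n. unfold plus, minus, opp, scal; simpl. unfold mult; simpl.
  unfold l2coef. rewrite !Rmult_assoc. f_equal.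
  rewrite <- Rminus_def, <- minus_sum, (Rmult_comm (sum_f_R0 _ n)), scal_sum.
  apply sum_eq. intros k Hk.
  unfold re_coef, im_coef, pow_coef. rewrite pow1, !Rmult_1_l, pow_inv.
  replace (r ^ n) with (r ^ k * r ^ (n - k)) by (rewrite <- pow_add; f_equal; lia).
  replace (INR n * z) with (INR k * z + INR (n - k) * z) by (rewrite minus_INR by exact Hk; ring).
  rewrite cos_plus. ring.
Qed.

Lemma base_im_mul_le z r : 0 <= r < 1 ->
  base_im 1 z r * base_im (/ 3) z r <= base_re 1 z r * base_re (/ 3) z r.
Proof.
  intros Hr. unfold base_re, base_im.
  pose proof (sin2_cos2 z) as Hsc. unfold Rsqr in Hsc. pose proof (COS_bound z).
  assert (Hr2 : r * r * (sin z * sin z + cos z * cos z) = r * r) by (rewrite Hsc; ring).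
  assert (0 <= 2 * (r * cos z - 1) ^ 2 + 1 - r ^ 2)
    by (pose proof (pow2_ge_0 (r * cos z - 1)); nra).
  nra.
Qed.

Lemma l2gen_re_nonneg g z r : 0 < g < 1 -> 0 <= z <= PI -> 0 <= r < 1 -> 0 <= l2gen_re g z r.
Proof.
  intros Hg Hz Hr. assert (Hr' : Rabs r < 1) by (rewrite Rabs_pos_eq; lra).
  assert (H3 : 0 <= / 3 <= 1) by lra. assert (H1 : 0 <= 1 <= 1) by lra.
  unfold l2gen_re.
  destruct (PSeries_pow_closed_form g (/ 3) z Hg H3 r Hr) as [-> ->].
  destruct (PSeries_pow_closed_form g 1 z Hg H1 r Hr) as [-> ->].
  unfold pow_abs, pow_arg.
  set (u := base_im 1 z r / base_re 1 z r). set (v := base_im (/ 3) z r / base_re (/ 3) z r).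
  replace (_ * _ - _) with (Rpower (base_sqnorm (/ 3) z r) (g / 2)
      * Rpower (base_sqnorm 1 z r) (g / 2) * cos (g * atan v + g * atan u))
    by (rewrite cos_plus; ring).
  pose proof (base_re_pos 1 z r H1 Hr'). pose proof (base_re_pos (/ 3) z r H3 Hr').
  pose proof (sin_ge_0 z (proj1 Hz) (proj2 Hz)).
  assert (Hu : u <= 0) by (apply Rmult_le_0_r;
    [unfold base_im; nra | left; apply Rinv_0_lt_compat; assumption]).
  assert (Hv : v <= 0) by (apply Rmult_le_0_r;
    [unfold base_im; nra | left; apply Rinv_0_lt_compat; assumption]).
  assert (Huv : u * v <= 1).
  { pose proof (base_im_mul_le z r Hr).
    replace (u * v) with ((base_im 1 z r * base_im (/ 3) z r) / (base_re 1 z r * base_re (/ 3) z r))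
      by (unfold u, v; field; lra).
    apply Rmult_le_reg_r with (base_re 1 z r * base_re (/ 3) z r); [nra|].
    unfold Rdiv. rewrite Rmult_assoc, Rinv_l by nra. lra. }
  pose proof (atan_add_ge u v Hu Hv Huv).
  assert (atan u <= 0) by (rewrite <- atan_0; apply atan_le, Hu).
  assert (atan v <= 0) by (rewrite <- atan_0; apply atan_le, Hv).
  apply Rmult_le_pos; [left; apply Rpower_pos|].
  apply Rmult_le_pos; [left; apply Rmult_lt_0_compat; apply Rpower_pos|].
  apply cos_ge_0; nra.
Qed.

Lemma l2gen_re_0_le g r : 0 < g < 1 -> 0 <= r < 1 ->
  l2gen_re g 0 r <= Rpower (3 / 2) g * Rpower (1 - r) g.
Proof.
  intros Hg Hr.
  assert (H3 : 0 <= / 3 <= 1) by lra. assert (H1 : 0 <= 1 <= 1) by lra.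
  assert (Harg : forall al, pow_arg g al 0 r = 0).
  { intros al. unfold pow_arg, base_im. rewrite sin_0, Rmult_0_r, Ropp_0, Rdiv_0_l, atan_0. ring. }
  assert (Habs : forall al, 0 <= al <= 1 -> pow_abs g al 0 r = Rpower (1 - al * r) g).
  { intros al Hal. unfold pow_abs, base_sqnorm, base_re, base_im.
    rewrite sin_0, cos_0, Rmult_0_r, Ropp_0, Rmult_1_r.
    replace ((1 - al * r) ^ 2 + 0 ^ 2) with (Rpower (1 - al * r) (INR 2))
      by (rewrite Rpower_pow by nra; ring).
    rewrite Rpower_mult. f_equal. simpl INR. field. }
  unfold l2gen_re.
  destruct (PSeries_pow_closed_form g (/ 3) 0 Hg H3 r Hr) as [-> ->].
  destruct (PSeries_pow_closed_form g 1 0 Hg H1 r Hr) as [-> ->].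
  rewrite !Harg, !Habs, cos_0, sin_0, Rmult_1_l by assumption.
  assert (Rpower (1 - / 3 * r) g <= 1).
  { replace 1 with (Rpower 1 g) at 2 by (unfold Rpower; rewrite ln_1, Rmult_0_r; apply exp_0).
    apply Rle_Rpower_l; lra. }
  rewrite !Rmult_1_r, !Rmult_0_r, Rminus_0_r.
  apply Rmult_le_compat_l; [left; apply Rpower_pos|].
  pose proof (Rpower_pos (1 - r) g). nra.
Qed.

Lemma is_lim_l2gen_re_0 g : 0 < g < 1 -> is_lim_seq (fun n => l2gen_re g 0 (1 - (/ 2) ^ n)) 0.
Proof.
  intros Hg.
  assert (Hq : forall n, 0 < (/ 2) ^ n <= 1).
  { intros n. split; [apply pow_lt; lra | apply pow_unit_interval; lra]. }
  assert (Hlt : Rpower (/ 2) g < 1).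
  { unfold Rpower. rewrite <- exp_0. apply exp_increasing.
    assert (ln (/ 2) < 0) by (rewrite <- ln_1; apply ln_increasing; lra). nra. }
  apply is_lim_seq_le_le with (fun _ => 0) (fun n => Rpower (3 / 2) g * Rpower (/ 2) g ^ n).
  - intros n. specialize (Hq n). split.
    + apply l2gen_re_nonneg; [exact Hg | pose proof PI_RGT_0; lra | lra].
    + eapply Rle_trans; [apply l2gen_re_0_le; [exact Hg | lra]|].
      replace (1 - (1 - (/ 2) ^ n)) with ((/ 2) ^ n) by ring.
      rewrite Rpower_pow_l by lra. lra.
  - apply is_lim_seq_const.
  - replace (Finite 0) with (Rbar_mult (Rpower (3 / 2) g) 0) by (simpl; f_equal; ring).
    apply is_lim_seq_scal_l, is_lim_seq_geom.
    rewrite Rabs_pos_eq by (left; apply Rpower_pos). exact Hlt.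
Qed.

Lemma Series_l2coef_cos_sub g z r : 0 < g < 1 -> 0 <= r < 1 ->
  Series (fun k => l2coef g k * (cos (INR k * z) - 1) * r ^ k) = l2gen_re g z r - l2gen_re g 0 r.
Proof.
  intros Hg Hr. assert (Hr' : Rabs r < 1) by (rewrite Rabs_pos_eq; lra).
  apply is_series_unique.
  eapply is_series_ext;
    [|exact (is_series_minus _ _ _ _ (is_series_l2coef_cos g z r Hg Hr')
                                     (is_series_l2coef_cos g 0 r Hg Hr'))].
  intros k. unfold plus, minus, opp; simpl. rewrite Rmult_0_r, cos_0. ring.
Qed.

Lemma ex_series_abs_l2coef_cos_sub g z : 0 < g < 1 ->
  ex_series (fun k => Rabs (l2coef g k * (cos (INR k * z) - 1))).
Proof.
  intros Hg. apply ex_series_abs_le with (fun k => 2 * Rabs (l2coef g k)).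
  - intros k. rewrite Rabs_mult. pose proof (COS_bound (INR k * z)).
    assert (Rabs (cos (INR k * z) - 1) <= 2) by (apply Rabs_le; lra).
    pose proof (Rabs_pos (l2coef g k)). nra.
  - apply (ex_series_scal_l 2 (fun k => Rabs (l2coef g k))), ex_series_abs_l2coef, Hg.
Qed.

Lemma is_lim_seq_one_sub_half_pow : is_lim_seq (fun n => 1 - (/ 2) ^ n) 1.
Proof.
  replace (Finite 1) with (Rbar_minus 1 0) by (simpl; f_equal; ring).
  apply is_lim_seq_minus'; [apply is_lim_seq_const|].
  apply is_lim_seq_geom. rewrite Rabs_pos_eq; lra.
Qed.

Theorem lemma3p6 (gamma z : R) :
  0 < gamma < 1 -> 0 <= z <= PI ->
  ex_series (gterm gamma z) /\ 0 <= Series (gterm gamma z).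
Proof.
  intros Hg Hz.
  set (c k := l2coef gamma k * (cos (INR k * z) - 1)).
  assert (Hc : ex_series (fun k => Rabs (c k))) by apply ex_series_abs_l2coef_cos_sub, Hg.
  assert (Hc0 : c 0%nat = 0) by (unfold c; rewrite Rmult_0_l, cos_0; ring).
  split; [apply (ex_series_incr_1 c), ex_series_Rabs, Hc|].
  change (gterm gamma z) with (fun k => c (S k)). rewrite <- (Series_incr_1_aux c Hc0).
  set (rn n := 1 - (/ 2) ^ n).
  assert (Hrn : forall n, 0 <= rn n < 1).
  { intros n. pose proof (pow_unit_interval (/ 2) n). pose proof (pow_lt (/ 2) n). unfold rn. lra. }
  change (Rbar_le 0 (Series c)).
  apply (is_lim_seq_le (fun n => - l2gen_re gamma 0 (rn n))
                       (fun n => Series (fun k => c k * rn n ^ k))).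
  - intros n. unfold c. rewrite Series_l2coef_cos_sub by (exact Hg || apply Hrn).
    pose proof (l2gen_re_nonneg gamma z (rn n) Hg Hz (Hrn n)). lra.
  - replace (Finite 0) with (Rbar_opp 0) by (simpl; f_equal; ring).
    apply (is_lim_seq_opp (fun n => l2gen_re gamma 0 (rn n)) 0), is_lim_l2gen_re_0, Hg.
  - apply is_lim_seq_Series_pow; [exact Hc | intros n; specialize (Hrn n); lra |].
    apply is_lim_seq_one_sub_half_pow.
Qed.
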